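(* There are absolute constants $c_1,c_2>0$ such that for every $n\ge2$, every $0<\rho\le1/3$ and every $0<s\le c_1/\log(1/\rho)$, there exists an $n$-agent symmetric averaging system with parameter $\rho$ whose $s$-energy satisfies $\mathcal{E}(s)\ge\bigl(c_2/(\rho s)\bigr)^{n-1}$.
   Context: A (symmetric) averaging system with parameter $\rho\in(0,1/2]$ on $n$ agents consists of an infinite sequence of undirected graphs $(g_t)_{t\ge1}$ on $\{1,\dots,n\}$, each with a self-loop at every vertex, together with positions $x_i(t)\in[0,1]$ obeying: for each $t$ and vertex $i$, with $L_i(t)=\min\{x_j(t): \{i,j\}\in g_t\}$, $R_i(t)=\max\{x_j(t): \{i,j\}\in g_t\}$ and $\delta_i(t)=\rho(R_i(t)-L_i(t))$, the new position satisfies $L_i(t)+\delta_i(t)\le x_i(t+1)\le R_i(t)-\delta_i(t)$. Its $s$-energy is $\sum_{t\ge1}\ell_t$, where $\ell_t=\sum_m\mu_m^s$ over the lengths $\mu_m$ of the maximal intervals of the union of the segments between $x_i(t)$ and $x_j(t)$ over edges $\{i,j\}\in g_t$ (with $0^s=0$). Logarithms are base 2. *)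

From Stdlib Require Import Reals Lra Lia List.
Import ListNotations.
Open Scope R_scope.

(* Agents are the naturals 0..n-1.  Time steps t = 1, 2, 3, ...
   g t i j : bool  is the adjacency of the graph g_t;
   x t i   : R     is the position x_i(t). *)

Definition log2 (y : R) : R := ln y / ln 2.

(* mu^s with the convention 0^s = 0 (lengths are >= 0) *)
Definition pw (mu s : R) : R := if Rle_dec mu 0 then 0 else Rpower mu s.

Definition nbrs (n : nat) (g : nat -> nat -> nat -> bool) (t i : nat) : list nat :=
  filter (fun j => g t i j) (seq 0 n).

Definition Lpos (n : nat) (g : nat -> nat -> nat -> bool) (x : nat -> nat -> R)
  (t i : nat) : R :=
  fold_right Rmin (x t i) (map (x t) (nbrs n g t i)).
Definition Rpos (n : nat) (g : nat -> nat -> nat -> bool) (x : nat -> nat -> R)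
  (t i : nat) : R :=
  fold_right Rmax (x t i) (map (x t) (nbrs n g t i)).

Definition averaging_system (n : nat) (rho : R)
  (g : nat -> nat -> nat -> bool) (x : nat -> nat -> R) : Prop :=
  0 < rho <= 1/2 /\
  (forall t i, (1 <= t)%nat -> (i < n)%nat -> g t i i = true) /\
  (forall t i j, (1 <= t)%nat -> (i < n)%nat -> (j < n)%nat -> g t i j = g t j i) /\
  (forall t i, (1 <= t)%nat -> (i < n)%nat -> 0 <= x t i <= 1) /\
  (forall t i, (1 <= t)%nat -> (i < n)%nat ->
     let L := Lpos n g x t i in
     let Rr := Rpos n g x t i in
     let d := rho * (Rr - L) in
     L + d <= x (S t) i <= Rr - d).

Definition in_edge_union (n : nat) (g : nat -> nat -> nat -> bool)
  (x : nat -> nat -> R) (t : nat) (y : R) : Prop :=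
  exists i j, (i < n)%nat /\ (j < n)%nat /\ g t i j = true /\
    Rmin (x t i) (x t j) <= y <= Rmax (x t i) (x t j).

(* a list of closed intervals [a,b], with a <= b, sorted and pairwise separated
   by gaps (b_k < a_{k+1}); such a list describes a union of closed intervals
   via its maximal intervals (connected components). *)
Fixpoint separated_intervals (l : list (R * R)) : Prop :=
  match l with
  | [] => True
  | (a, b) :: l' =>
      a <= b /\
      match l' with
      | [] => True
      | (a', _) :: _ => b < a'
      end /\ separated_intervals l'
  end.

(* l_t = sum over maximal intervals of the edge union of (length)^s.
   ell_value n g x s t v  means  l_t = v. *)
Definition ell_value (n : nat) (g : nat -> nat -> nat -> bool)
  (x : nat -> nat -> R) (s : R) (t : nat) (v : R) : Prop :=
  exists comps : list (R * R),
    separated_intervals comps /\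
    (forall y, in_edge_union n g x t y <->
               exists ab, In ab comps /\ fst ab <= y <= snd ab) /\
    v = fold_right Rplus 0 (map (fun ab => pw (snd ab - fst ab) s) comps).

(* sum_{t>=1} l_t >= B  (as a series of nonnegative terms, possibly divergent):
   the supremum of the partial sums is at least B *)
Definition energy_ge (l : nat -> R) (B : R) : Prop :=
  forall L, L < B -> exists T : nat, L < fold_right Rplus 0 (map l (seq 1 T)).

From Stdlib Require Import Reals Lra Lia List ZArith FunctionalExtensionality.
Import ListNotations.
Open Scope R_scope.

(* Put agent 0 at 0 and all others at 1.  The schedule [collapse K m k] gathers agents
   [k .. k+m] when [k+1 .. k+m] already sit together: [K] times, agents [k] and [k+1] move
   towards each other by [rho] times their distance and then [k+1 .. k+m] are gathered
   recursively; a final merge sends everybody to the midpoint.  Each round shrinks the gap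
   between [k] and the rest by a factor at least [1 - 2 rho], so it stays above
   [(1 - 2 rho)^K] times its initial value, and every recursive call starts from [rho] times
   that gap.  Hence each level of the recursion multiplies the energy by
   [K (1 - 2 rho)^(K s) rho^s], which is at least [e^-6 / (4 rho s)] for [K ~ 1/(rho s)] and
   [s log(1/rho) <= 1].  The energy of a step is at least [mu^s] for the segment of the
   edge [{k, k+1}], since that segment lies in one maximal interval of the edge union. *)

Lemma fold_Rmin_glb (l : list R) (A init : R) :
  A <= init -> (forall y, In y l -> A <= y) -> A <= fold_right Rmin init l.
Proof.
  induction l as [|y l IH]; intros Hinit Hl; simpl; [exact Hinit|].
  apply Rmin_glb; [apply Hl; left; reflexivity|].
  apply IH; [exact Hinit|]. intros z Hz; apply Hl; right; exact Hz.
Qed.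

Lemma fold_Rmin_le_init (l : list R) (init : R) : fold_right Rmin init l <= init.
Proof.
  induction l as [|y l IH]; simpl; [lra|].
  eapply Rle_trans; [apply Rmin_r | exact IH].
Qed.

Lemma fold_Rmin_le_In (l : list R) (init y : R) : In y l -> fold_right Rmin init l <= y.
Proof.
  induction l as [|z l IH]; intros Hy; [destruct Hy|]; simpl.
  destruct Hy as [<-|Hy]; [apply Rmin_l|].
  eapply Rle_trans; [apply Rmin_r | exact (IH Hy)].
Qed.

Lemma fold_Rmax_lub (l : list R) (A init : R) :
  init <= A -> (forall y, In y l -> y <= A) -> fold_right Rmax init l <= A.
Proof.
  induction l as [|y l IH]; intros Hinit Hl; simpl; [exact Hinit|].
  apply Rmax_lub; [apply Hl; left; reflexivity|].
  apply IH; [exact Hinit|]. intros z Hz; apply Hl; right; exact Hz.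
Qed.

Lemma fold_Rmax_ge_init (l : list R) (init : R) : init <= fold_right Rmax init l.
Proof.
  induction l as [|y l IH]; simpl; [lra|].
  eapply Rle_trans; [exact IH | apply Rmax_r].
Qed.

Lemma fold_Rmax_ge_In (l : list R) (init y : R) : In y l -> y <= fold_right Rmax init l.
Proof.
  induction l as [|z l IH]; intros Hy; [destruct Hy|]; simpl.
  destruct Hy as [<-|Hy]; [apply Rmax_l|].
  eapply Rle_trans; [exact (IH Hy) | apply Rmax_r].
Qed.

(** * Maximal intervals of a finite union of segments *)

Definition in_union (l : list (R * R)) (y : R) : Prop :=
  exists ab, In ab l /\ fst ab <= y <= snd ab.

Lemma in_union_cons (a b : R) (l : list (R * R)) (y : R) :
  in_union ((a, b) :: l) y <-> a <= y <= b \/ in_union l y.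
Proof.
  split.
  - intros [ab [[<-|Hin] Hy]]; [left; exact Hy | right; exists ab; auto].
  - intros [Hy|[ab [Hin Hy]]]; [exists (a, b) | exists ab]; simpl; auto.
Qed.

Definition starts_above (m : R) (l : list (R * R)) : Prop :=
  forall ab, In ab l -> m < fst ab.

Lemma separated_cons (a b : R) (l : list (R * R)) :
  separated_intervals ((a, b) :: l) <->
  a <= b /\ starts_above b l /\ separated_intervals l.
Proof.
  revert a b; induction l as [|[a' b'] l IH]; intros a b.
  - simpl; split; [intros [Hab _]; split; [exact Hab|split; [intros ab []|exact I]]|tauto].
  - split.
    + intros [Hab [Hba' Hsep]]. split; [exact Hab|split; [|exact Hsep]].
      apply IH in Hsep as [Ha'b' [Habove _]].
      intros ab [<-|Hin]; [exact Hba'|]. specialize (Habove ab Hin). lra.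
    + intros [Hab [Habove Hsep]]. split; [exact Hab|split; [|exact Hsep]].
      apply (Habove (a', b')); left; reflexivity.
Qed.

Fixpoint insert_interval (a b : R) (l : list (R * R)) : list (R * R) :=
  match l with
  | [] => [(a, b)]
  | (c, d) :: l' =>
      if Rlt_dec b c then (a, b) :: l
      else if Rlt_dec d a then (c, d) :: insert_interval a b l'
      else insert_interval (Rmin a c) (Rmax b d) l'
  end.

Definition components (l : list (R * R)) : list (R * R) :=
  fold_right (fun ab acc => insert_interval (fst ab) (snd ab) acc) [] l.

Lemma starts_above_insert (m a b : R) (l : list (R * R)) :
  m < a -> starts_above m l -> starts_above m (insert_interval a b l).
Proof.
  revert a b; induction l as [|[c d] l IH]; intros a b Hma Hl; simpl.
  - intros ab [<-|[]]; exact Hma.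
  - assert (Hmc : m < c) by (apply (Hl (c, d)); left; reflexivity).
    assert (Hl' : starts_above m l) by (intros ab Hin; apply Hl; right; exact Hin).
    destruct (Rlt_dec b c); [|destruct (Rlt_dec d a)].
    + intros ab [<-|Hin]; [exact Hma | apply Hl; exact Hin].
    + intros ab [<-|Hin]; [exact Hmc | exact (IH a b Hma Hl' ab Hin)].
    + apply IH; [unfold Rmin; destruct (Rle_dec a c); lra | exact Hl'].
Qed.

Lemma insert_interval_separated (a b : R) (l : list (R * R)) :
  a <= b -> separated_intervals l -> separated_intervals (insert_interval a b l).
Proof.
  revert a b; induction l as [|[c d] l IH]; intros a b Hab Hsep; simpl.
  - tauto.
  - pose proof Hsep as [Hcd [Habove Hsep']]%separated_cons.
    destruct (Rlt_dec b c); [|destruct (Rlt_dec d a)].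
    + apply separated_cons. split; [exact Hab|split; [|exact Hsep]].
      intros ab [<-|Hin]; [simpl; exact r|]. specialize (Habove ab Hin). lra.
    + apply separated_cons. split; [exact Hcd|split; [|apply IH; assumption]].
      apply starts_above_insert; assumption.
    + apply IH; [|exact Hsep']. unfold Rmin, Rmax.
      destruct (Rle_dec a c); destruct (Rle_dec b d); lra.
Qed.

Lemma overlapping_segments_hull (a b c d y : R) :
  a <= b -> c <= d -> ~ b < c -> ~ d < a ->
  Rmin a c <= y <= Rmax b d <-> a <= y <= b \/ c <= y <= d.
Proof.
  intros Hab Hcd Hbc Hda. unfold Rmin, Rmax.
  destruct (Rle_dec a c); destruct (Rle_dec b d); split;
    try (intros [Hy|Hy]; lra); intros Hy; destruct (Rle_dec y b); lra.
Qed.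

Lemma in_union_insert (a b : R) (l : list (R * R)) (y : R) :
  a <= b -> separated_intervals l ->
  in_union (insert_interval a b l) y <-> a <= y <= b \/ in_union l y.
Proof.
  revert a b; induction l as [|[c d] l IH]; intros a b Hab Hsep; simpl.
  - rewrite in_union_cons. split; [tauto|]. intros [Hy|[ab [[] _]]]; left; exact Hy.
  - pose proof Hsep as [Hcd [_ Hsep']]%separated_cons.
    destruct (Rlt_dec b c); [|destruct (Rlt_dec d a)].
    + rewrite in_union_cons. reflexivity.
    + rewrite !in_union_cons, IH by assumption. tauto.
    + rewrite IH, in_union_cons, overlapping_segments_hull by
        (assumption || (unfold Rmin, Rmax; destruct (Rle_dec a c); destruct (Rle_dec b d); lra)).
      tauto.
Qed.

Definition well_ordered_segments (l : list (R * R)) : Prop :=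
  forall ab, In ab l -> fst ab <= snd ab.

Lemma well_ordered_segments_cons (a b : R) (l : list (R * R)) :
  well_ordered_segments ((a, b) :: l) -> a <= b /\ well_ordered_segments l.
Proof.
  intros Hl; split; [apply (Hl (a, b)); left; reflexivity|].
  intros ab Hin; apply Hl; right; exact Hin.
Qed.

Lemma components_separated (l : list (R * R)) :
  well_ordered_segments l -> separated_intervals (components l).
Proof.
  induction l as [|[a b] l IH]; intros Hl; simpl; [exact I|].
  apply well_ordered_segments_cons in Hl as [Hab Hl].
  apply insert_interval_separated; [exact Hab | exact (IH Hl)].
Qed.

Lemma in_union_components (l : list (R * R)) (y : R) :
  well_ordered_segments l -> in_union (components l) y <-> in_union l y.
Proof.
  induction l as [|[a b] l IH]; intros Hl; simpl; [reflexivity|].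
  pose proof (components_separated _ (proj2 (well_ordered_segments_cons _ _ _ Hl))).
  apply well_ordered_segments_cons in Hl as [Hab Hl].
  rewrite in_union_insert, IH, in_union_cons by assumption. reflexivity.
Qed.

Lemma separated_first_start_le (a b : R) (l : list (R * R)) :
  separated_intervals ((a, b) :: l) -> forall ab, In ab ((a, b) :: l) -> a <= fst ab.
Proof.
  intros [Hab [Habove _]]%separated_cons ab [<-|Hin]; simpl; [lra|].
  specialize (Habove ab Hin). lra.
Qed.

Lemma segment_in_component (l : list (R * R)) (y1 y2 : R) :
  separated_intervals l -> y1 <= y2 -> (forall y, y1 <= y <= y2 -> in_union l y) ->
  exists ab, In ab l /\ fst ab <= y1 /\ y2 <= snd ab.
Proof.
  induction l as [|[a b] l IH]; intros Hsep Hy Hcov.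
  - destruct (Hcov y1) as [ab [[] _]]; lra.
  - pose proof Hsep as [Hab [Habove Hsep']]%separated_cons.
    destruct (proj1 (in_union_cons a b l y1) (Hcov y1 (conj (Rle_refl _) Hy)))
      as [Hy1|[ab [Hin Hy1]]].
    + destruct (Rle_dec y2 b) as [Hy2|Hy2].
      { exists (a, b); simpl; split; [left; reflexivity | lra]. }
      exfalso.
      (* a point of [y1, y2] in the gap between [a, b] and the next component *)
      assert (Hgap : exists z, y1 <= z <= y2 /\ b < z /\ starts_above z l).
      { destruct l as [|[a' b'] l'].
        - exists y2. split; [lra|]. split; [lra|]. intros ab [].
        - assert (Hba' : b < a') by (apply (Habove (a', b')); left; reflexivity).
          exists ((b + Rmin a' y2) / 2).
          assert (b < Rmin a' y2) by (apply Rmin_glb_lt; lra).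
          pose proof (Rmin_l a' y2); pose proof (Rmin_r a' y2).
          split; [lra|]. split; [lra|]. intros ab Hin.
          pose proof (separated_first_start_le _ _ _ Hsep' ab Hin). lra. }
      destruct Hgap as [z [Hz [Hbz Hzl]]].
      destruct (proj1 (in_union_cons a b l z) (Hcov z Hz)) as [Hz'|[ab [Hin Hz']]];
        [lra | specialize (Hzl ab Hin); lra].
    + assert (Hby1 : b < y1) by (specialize (Habove ab Hin); lra).
      destruct (IH Hsep' Hy) as [ab' [Hin' Hab']].
      * intros y Hy'. destruct (proj1 (in_union_cons a b l y) (Hcov y Hy')) as [H|H];
          [lra | exact H].
      * exists ab'; split; [right; exact Hin' | exact Hab'].
Qed.

Lemma pw_nonneg (mu s : R) : 0 <= pw mu s.
Proof. unfold pw, Rpower; destruct (Rle_dec mu 0); [lra | left; apply exp_pos]. Qed.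

Lemma pw_le (u v s : R) : 0 <= s -> u <= v -> pw u s <= pw v s.
Proof.
  intros Hs Huv. unfold pw. destruct (Rle_dec u 0); destruct (Rle_dec v 0); try lra.
  - unfold Rpower; left; apply exp_pos.
  - apply Rle_Rpower_l; lra.
Qed.

Lemma pw_scale (a mu s : R) : 0 < a -> 0 <= mu -> pw (a * mu) s = Rpower a s * pw mu s.
Proof.
  intros Ha Hmu. unfold pw. destruct (Rle_dec mu 0).
  - replace mu with 0 by lra. rewrite Rmult_0_r. destruct (Rle_dec 0 0); lra.
  - destruct (Rle_dec (a * mu) 0); [nra|]. rewrite Rpower_mult_distr; lra.
Qed.

Lemma pw_1 (s : R) : pw 1 s = 1.
Proof.
  unfold pw, Rpower. destruct (Rle_dec 1 0); [lra|].
  rewrite ln_1, Rmult_0_r, exp_0. reflexivity.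
Qed.

Definition pw_sum (s : R) (l : list (R * R)) : R :=
  fold_right Rplus 0 (map (fun ab => pw (snd ab - fst ab) s) l).

Lemma pw_sum_nonneg (s : R) (l : list (R * R)) : 0 <= pw_sum s l.
Proof.
  induction l as [|ab l IH]; unfold pw_sum in *; simpl; [lra|].
  pose proof (pw_nonneg (snd ab - fst ab) s); lra.
Qed.

Lemma pw_sum_ge_In (s : R) (l : list (R * R)) (ab : R * R) :
  In ab l -> pw (snd ab - fst ab) s <= pw_sum s l.
Proof.
  induction l as [|ab' l IH]; intros Hin; [destruct Hin|].
  pose proof (pw_sum_nonneg s l); pose proof (pw_nonneg (snd ab' - fst ab') s).
  unfold pw_sum in *; simpl. destruct Hin as [->|Hin]; [lra|]. specialize (IH Hin); lra.
Qed.

Section EdgeUnion.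

Variables (n : nat) (g : nat -> nat -> nat -> bool) (x : nat -> nat -> R).

Definition edge_segments (t : nat) : list (R * R) :=
  flat_map (fun i => flat_map (fun j =>
      if g t i j then [(Rmin (x t i) (x t j), Rmax (x t i) (x t j))] else [])
    (seq 0 n)) (seq 0 n).

Lemma In_edge_segments (t : nat) (ab : R * R) :
  In ab (edge_segments t) <->
  exists i j, (i < n)%nat /\ (j < n)%nat /\ g t i j = true /\
    ab = (Rmin (x t i) (x t j), Rmax (x t i) (x t j)).
Proof.
  unfold edge_segments. rewrite in_flat_map. split.
  - intros [i [Hi Hab]]. apply in_flat_map in Hab as [j [Hj Hab]].
    apply in_seq in Hi; apply in_seq in Hj.
    destruct (g t i j) eqn:E; [|destruct Hab]. destruct Hab as [<-|[]].
    exists i, j; repeat split; auto; lia.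
  - intros [i [j [Hi [Hj [E ->]]]]]. exists i; split; [apply in_seq; lia|].
    apply in_flat_map. exists j; split; [apply in_seq; lia|]. rewrite E; left; reflexivity.
Qed.

Lemma edge_segments_well_ordered (t : nat) : well_ordered_segments (edge_segments t).
Proof.
  intros ab [i [j [_ [_ [_ ->]]]]]%In_edge_segments. apply Rminmax.
Qed.

Definition ell (s : R) (t : nat) : R := pw_sum s (components (edge_segments t)).

Lemma ell_value_ell (s : R) (t : nat) : ell_value n g x s t (ell s t).
Proof.
  exists (components (edge_segments t)).
  split; [apply components_separated, edge_segments_well_ordered|]. split; [|reflexivity].
  intros y. fold (in_union (components (edge_segments t)) y).
  rewrite in_union_components by apply edge_segments_well_ordered. split.
  - intros [i [j [Hi [Hj [E Hy]]]]].
    exists (Rmin (x t i) (x t j), Rmax (x t i) (x t j)); split; [|exact Hy].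
    apply In_edge_segments; exists i, j; auto.
  - intros [ab [[i [j [Hi [Hj [E ->]]]]]%In_edge_segments Hy]]. exists i, j; auto.
Qed.

Lemma ell_nonneg (s : R) (t : nat) : 0 <= ell s t.
Proof. apply pw_sum_nonneg. Qed.

Lemma ell_ge_edge (s : R) (t i j : nat) :
  0 <= s -> (i < n)%nat -> (j < n)%nat -> g t i j = true ->
  pw (Rabs (x t i - x t j)) s <= ell s t.
Proof.
  intros Hs Hi Hj E.
  set (comps := components (edge_segments t)).
  destruct (segment_in_component comps (Rmin (x t i) (x t j)) (Rmax (x t i) (x t j)))
    as [ab [Hin [H1 H2]]].
  - apply components_separated, edge_segments_well_ordered.
  - apply Rminmax.
  - intros y Hy. apply in_union_components; [apply edge_segments_well_ordered|].
    exists (Rmin (x t i) (x t j), Rmax (x t i) (x t j)).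
    split; [apply In_edge_segments; exists i, j; auto | exact Hy].
  - eapply Rle_trans; [|apply (pw_sum_ge_In s comps ab Hin)]. apply pw_le; [exact Hs|].
    unfold Rmin, Rmax, Rabs in *; destruct (Rle_dec (x t i) (x t j));
      destruct (Rcase_abs (x t i - x t j)); lra.
Qed.

End EdgeUnion.

(** * Elementary moves *)

Inductive step : Set := Pull (k : nat) | Merge (k : nat) | Idle.

Definition graph (st : step) (i j : nat) : bool :=
  match st with
  | Pull k => Nat.eqb i j || (Nat.eqb i k && Nat.eqb j (S k)) || (Nat.eqb i (S k) && Nat.eqb j k)
  | Merge k => Nat.eqb i j || (Nat.eqb i k && Nat.ltb k j) || (Nat.eqb j k && Nat.ltb k i)
  | Idle => Nat.eqb i j
  end.

Lemma graph_Pull (k i j : nat) :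
  graph (Pull k) i j = true <-> i = j \/ (i = k /\ j = S k) \/ (i = S k /\ j = k).
Proof.
  simpl. rewrite !Bool.orb_true_iff, !Bool.andb_true_iff, !Nat.eqb_eq. tauto.
Qed.

Lemma graph_Merge (k i j : nat) :
  graph (Merge k) i j = true <-> i = j \/ (i = k /\ (k < j)%nat) \/ (j = k /\ (k < i)%nat).
Proof.
  simpl. rewrite !Bool.orb_true_iff, !Bool.andb_true_iff, !Nat.eqb_eq, !Nat.ltb_lt. tauto.
Qed.

Lemma graph_refl (st : step) (i : nat) : graph st i i = true.
Proof. destruct st; simpl; rewrite Nat.eqb_refl; reflexivity. Qed.

Lemma graph_sym (st : step) (i j : nat) : graph st i j = graph st j i.
Proof.
  apply Bool.eq_iff_eq_true. destruct st as [k|k|];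
    [rewrite !graph_Pull | rewrite !graph_Merge | simpl; rewrite !Nat.eqb_eq]; intuition.
Qed.

Definition nbr_min (n : nat) (gr : nat -> nat -> bool) (c : nat -> R) (i : nat) : R :=
  fold_right Rmin (c i) (map c (filter (gr i) (seq 0 n))).

Definition nbr_max (n : nat) (gr : nat -> nat -> bool) (c : nat -> R) (i : nat) : R :=
  fold_right Rmax (c i) (map c (filter (gr i) (seq 0 n))).

Lemma In_nbr_values (n : nat) (gr : nat -> nat -> bool) (c : nat -> R) (i : nat) (y : R) :
  In y (map c (filter (gr i) (seq 0 n))) <-> exists j, (j < n)%nat /\ gr i j = true /\ y = c j.
Proof.
  rewrite in_map_iff. split.
  - intros [j [<- [Hj E]%filter_In]]. apply in_seq in Hj. exists j; repeat split; auto; lia.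
  - intros [j [Hj [E ->]]]. exists j; split; [reflexivity|].
    apply filter_In; split; [apply in_seq; lia | exact E].
Qed.

Lemma nbr_min_le_max (n : nat) (gr : nat -> nat -> bool) (c : nat -> R) (i : nat) :
  nbr_min n gr c i <= c i <= nbr_max n gr c i.
Proof. split; [apply fold_Rmin_le_init | apply fold_Rmax_ge_init]. Qed.

Lemma nbr_extremes_two_values (n : nat) (gr : nat -> nat -> bool) (c : nat -> R) (i : nat)
  (a b : R) :
  c i = a -> (forall j, (j < n)%nat -> gr i j = true -> c j = a \/ c j = b) ->
  (exists j, (j < n)%nat /\ gr i j = true /\ c j = b) ->
  nbr_min n gr c i = Rmin a b /\ nbr_max n gr c i = Rmax a b.
Proof.
  intros Hi Hnbr Hb.
  assert (Hin : In b (map c (filter (gr i) (seq 0 n)))) by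
    (destruct Hb as [j [Hj [E <-]]]; apply In_nbr_values; exists j; auto).
  assert (Hvals : forall y, In y (map c (filter (gr i) (seq 0 n))) -> y = a \/ y = b).
  { intros y [j [Hj [E ->]]]%In_nbr_values. exact (Hnbr j Hj E). }
  unfold nbr_min, nbr_max; rewrite Hi. split; apply Rle_antisym.
  - apply Rmin_glb; [apply fold_Rmin_le_init | apply fold_Rmin_le_In; exact Hin].
  - apply fold_Rmin_glb; [apply Rmin_l|].
    intros y [->| ->]%Hvals; [apply Rmin_l | apply Rmin_r].
  - apply fold_Rmax_lub; [apply Rmax_l|].
    intros y [->| ->]%Hvals; [apply Rmax_l | apply Rmax_r].
  - apply Rmax_lub; [apply fold_Rmax_ge_init | apply fold_Rmax_ge_In; exact Hin].
Qed.

(* An agent moves as little as the averaging constraint allows, except at a [Merge],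
   where it jumps to the midpoint of its neighbourhood. *)
Definition move (rho : R) (to_midpoint : bool) (L H v : R) : R :=
  if to_midpoint then (L + H) / 2 else Rmax (L + rho * (H - L)) (Rmin v (H - rho * (H - L))).

Definition is_merge (st : step) : bool := match st with Merge _ => true | _ => false end.

Definition apply_step (n : nat) (rho : R) (st : step) (c : nat -> R) : nat -> R :=
  fun i => if Nat.ltb i n
           then move rho (is_merge st) (nbr_min n (graph st) c i) (nbr_max n (graph st) c i) (c i)
           else c i.

Lemma apply_step_valid (n : nat) (rho : R) (st : step) (c : nat -> R) (i : nat) :
  0 < rho <= 1/2 -> (i < n)%nat ->
  let L := nbr_min n (graph st) c i in
  let H := nbr_max n (graph st) c i in
  L + rho * (H - L) <= apply_step n rho st c i <= H - rho * (H - L).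
Proof.
  intros Hrho Hi L H. unfold apply_step. rewrite (proj2 (Nat.ltb_lt i n) Hi).
  pose proof (nbr_min_le_max n (graph st) c i) as HLH; fold L H in HLH.
  assert (0 <= (1/2 - rho) * (H - L)) by (apply Rmult_le_pos; lra).
  assert (0 <= rho * (H - L)) by (apply Rmult_le_pos; lra).
  unfold move; fold L H. destruct (is_merge st); [lra|].
  unfold Rmax, Rmin. destruct (Rle_dec (c i) (H - rho * (H - L)));
    destruct (Rle_dec (L + rho * (H - L)) _); lra.
Qed.

Lemma apply_step_range (n : nat) (rho : R) (st : step) (c : nat -> R) :
  0 < rho <= 1/2 -> (forall i, (i < n)%nat -> 0 <= c i <= 1) ->
  forall i, (i < n)%nat -> 0 <= apply_step n rho st c i <= 1.
Proof.
  intros Hrho Hc i Hi.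
  assert (HL : 0 <= nbr_min n (graph st) c i).
  { apply fold_Rmin_glb; [apply Hc; exact Hi|].
    intros y [j [Hj [_ ->]]]%In_nbr_values. apply Hc; exact Hj. }
  assert (HH : nbr_max n (graph st) c i <= 1).
  { apply fold_Rmax_lub; [apply Hc; exact Hi|].
    intros y [j [Hj [_ ->]]]%In_nbr_values. apply Hc; exact Hj. }
  pose proof (apply_step_valid n rho st c i Hrho Hi) as Hv; cbv zeta in Hv.
  pose proof (nbr_min_le_max n (graph st) c i).
  assert (0 <= rho * (nbr_max n (graph st) c i - nbr_min n (graph st) c i))
    by (apply Rmult_le_pos; lra).
  lra.
Qed.

Lemma apply_step_two_values (n : nat) (rho : R) (st : step) (c : nat -> R) (i : nat)
  (a b : R) :
  0 < rho <= 1/2 -> (i < n)%nat -> c i = a ->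
  (forall j, (j < n)%nat -> graph st i j = true -> c j = a \/ c j = b) ->
  (exists j, (j < n)%nat /\ graph st i j = true /\ c j = b) ->
  apply_step n rho st c i = if is_merge st then (a + b) / 2 else a + rho * (b - a).
Proof.
  intros Hrho Hi Ha Hnbr Hb.
  destruct (nbr_extremes_two_values n (graph st) c i a b Ha Hnbr Hb) as [HL HH].
  unfold apply_step, move. rewrite (proj2 (Nat.ltb_lt i n) Hi), HL, HH, Ha.
  destruct (is_merge st); unfold Rmin, Rmax; destruct (Rle_dec a b); [lra | lra | |].
  - destruct (Rle_dec a (b - rho * (b - a))); [|nra].
    destruct (Rle_dec (a + rho * (b - a)) a); nra.
  - destruct (Rle_dec a (a - rho * (a - b))); [nra|].
    destruct (Rle_dec (b + rho * (a - b)) (a - rho * (a - b))); nra.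
Qed.

Lemma apply_step_isolated (n : nat) (rho : R) (st : step) (c : nat -> R) (i : nat) :
  0 < rho <= 1/2 -> (forall j, graph st i j = true -> j = i) -> apply_step n rho st c i = c i.
Proof.
  intros Hrho Halone. destruct (Nat.ltb_spec i n) as [Hi|Hi].
  - rewrite (apply_step_two_values n rho st c i (c i) (c i) Hrho Hi eq_refl).
    + destruct (is_merge st); lra.
    + intros j _ E. left. rewrite (Halone j E). reflexivity.
    + exists i. split; [exact Hi|]. split; [apply graph_refl | reflexivity].
  - unfold apply_step. rewrite (proj2 (Nat.ltb_ge i n) Hi). reflexivity.
Qed.

Ltac case_nat := repeat match goal with
  | |- context [Nat.eqb ?a ?b] => destruct (Nat.eqb_spec a b)
  | |- context [Nat.ltb ?a ?b] => destruct (Nat.ltb_spec a b)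
  | |- context [Nat.leb ?a ?b] => destruct (Nat.leb_spec a b)
  end; simpl.

Lemma apply_Pull (n : nat) (rho : R) (k : nat) (c : nat -> R) :
  0 < rho <= 1/2 -> (S k < n)%nat ->
  apply_step n rho (Pull k) c = fun i =>
    if Nat.eqb i k then c k + rho * (c (S k) - c k)
    else if Nat.eqb i (S k) then c (S k) + rho * (c k - c (S k)) else c i.
Proof.
  intros Hrho Hk. apply functional_extensionality; intros i.
  destruct (Nat.eqb_spec i k) as [->|Hik]; [|destruct (Nat.eqb_spec i (S k)) as [->|Hisk]].
  - apply (apply_step_two_values n rho (Pull k) c k (c k) (c (S k))); auto; [lia| |].
    + intros j _ [->|[[_ ->]|[Hk' _]]]%graph_Pull; auto; lia.
    + exists (S k). split; [exact Hk|]. split; [apply graph_Pull; auto | reflexivity].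
  - apply (apply_step_two_values n rho (Pull k) c (S k) (c (S k)) (c k)); auto.
    + intros j _ [->|[[Hk' _]|[_ ->]]]%graph_Pull; auto; lia.
    + exists k. split; [lia|]. split; [apply graph_Pull; auto | reflexivity].
  - apply apply_step_isolated; [exact Hrho|].
    intros j [->|[[? _]|[? _]]]%graph_Pull; [reflexivity | lia | lia].
Qed.

Definition two_level (n : nat) (c : nat -> R) (k : nat) (a b : R) : nat -> R :=
  fun i => if Nat.eqb i k then a else if (Nat.ltb k i && Nat.ltb i n)%bool then b else c i.

Definition level (n : nat) (c : nat -> R) (k : nat) (v : R) : nat -> R :=
  fun i => if (Nat.leb k i && Nat.ltb i n)%bool then v else c i.

Lemma apply_Merge (n : nat) (rho : R) (k : nat) (c : nat -> R) (a b : R) :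
  0 < rho <= 1/2 -> (S k < n)%nat ->
  apply_step n rho (Merge k) (two_level n c k a b) = level n c k ((a + b) / 2).
Proof.
  intros Hrho Hk. apply functional_extensionality; intros i. unfold level.
  assert (Hval : forall j, (k < j < n)%nat -> two_level n c k a b j = b)
    by (intros j Hj; unfold two_level; case_nat; lia || reflexivity).
  destruct (Nat.eqb_spec i k) as [->|Hik]; [|destruct (Nat.leb_spec k i) as [Hki|Hki]].
  - rewrite Nat.leb_refl, (proj2 (Nat.ltb_lt k n)) by lia.
    rewrite (apply_step_two_values n rho (Merge k) _ k a b); auto; try lia.
    + unfold two_level; rewrite Nat.eqb_refl; reflexivity.
    + intros j Hj [->|[[_ ?]|[? ?]]]%graph_Merge; [left | right | lia];
        unfold two_level; case_nat; auto; lia.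
    + exists (S k). split; [exact Hk|]. split; [apply graph_Merge; auto | apply Hval; lia].
  - destruct (Nat.ltb_spec i n) as [Hin|Hin]; simpl.
    + rewrite (apply_step_two_values n rho (Merge k) _ i b a); auto.
      * simpl; lra.
      * apply Hval; lia.
      * intros j Hj [->|[[? _]|[-> _]]]%graph_Merge; [left; apply Hval; lia | lia |].
        right; unfold two_level; rewrite Nat.eqb_refl; reflexivity.
      * exists k. split; [lia|]. split; [apply graph_Merge; auto; lia|].
        unfold two_level; rewrite Nat.eqb_refl; reflexivity.
    + unfold apply_step. rewrite (proj2 (Nat.ltb_ge i n) Hin).
      unfold two_level; case_nat; lia || reflexivity.
  - rewrite apply_step_isolated; [| exact Hrho |].
    + unfold two_level; case_nat; lia || reflexivity.
    + intros j [->|[[? _]|[_ ?]]]%graph_Merge; [reflexivity | lia | lia].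
Qed.

(** * The collapsing schedule *)

Fixpoint run (n : nat) (rho : R) (c : nat -> R) (r : list step) : nat -> R :=
  match r with
  | [] => c
  | st :: r' => run n rho (apply_step n rho st c) r'
  end.

(* A lower bound for the contribution of a step to the energy: only the edge {k, k+1} counts. *)
Definition step_weight (n : nat) (s : R) (st : step) (c : nat -> R) : R :=
  match st with
  | Pull k | Merge k => if Nat.ltb (S k) n then pw (Rabs (c k - c (S k))) s else 0
  | Idle => 0
  end.

Fixpoint run_energy (n : nat) (rho s : R) (c : nat -> R) (r : list step) : R :=
  match r with
  | [] => 0
  | st :: r' => step_weight n s st c + run_energy n rho s (apply_step n rho st c) r'
  end.

Lemma run_app (n : nat) (rho : R) (r1 r2 : list step) (c : nat -> R) :
  run n rho c (r1 ++ r2) = run n rho (run n rho c r1) r2.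
Proof. revert c; induction r1; intros c; simpl; auto. Qed.

Lemma run_energy_app (n : nat) (rho s : R) (r1 r2 : list step) (c : nat -> R) :
  run_energy n rho s c (r1 ++ r2)
  = run_energy n rho s c r1 + run_energy n rho s (run n rho c r1) r2.
Proof. revert c; induction r1; intros c; simpl; [lra|]. rewrite IHr1. lra. Qed.

Lemma step_weight_nonneg (n : nat) (s : R) (st : step) (c : nat -> R) : 0 <= step_weight n s st c.
Proof. destruct st; simpl; try lra; destruct (Nat.ltb _ n); solve [lra | apply pw_nonneg]. Qed.

Lemma run_energy_nonneg (n : nat) (rho s : R) (r : list step) (c : nat -> R) :
  0 <= run_energy n rho s c r.
Proof.
  revert c; induction r as [|st r IH]; intros c; simpl; [lra|].
  pose proof (step_weight_nonneg n s st c); pose proof (IH (apply_step n rho st c)); lra.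
Qed.

Fixpoint collapse (K m k : nat) : list step :=
  match m with
  | O => []
  | S m' => concat (repeat (Pull k :: collapse K m' (S k)) K) ++ [Merge k]
  end.

Definition round_gain (rho s : R) (K : nat) : R :=
  INR K * Rpower ((1 - 2 * rho) ^ K) s * Rpower rho s.

Lemma round_gain_nonneg (rho s : R) (K : nat) : 0 <= round_gain rho s K.
Proof.
  unfold round_gain, Rpower. pose proof (pos_INR K).
  pose proof (exp_pos (s * ln ((1 - 2 * rho) ^ K))); pose proof (exp_pos (s * ln rho)).
  apply Rmult_le_pos; [apply Rmult_le_pos|]; lra.
Qed.

Lemma Rpower_le_1 (a s : R) : 0 < a <= 1 -> 0 <= s -> Rpower a s <= 1.
Proof.
  intros Ha Hs. replace 1 with (Rpower 1 s)
    by (unfold Rpower; rewrite ln_1, Rmult_0_r, exp_0; reflexivity).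
  apply Rle_Rpower_l; lra.
Qed.

Lemma pow_between_0_1 (a : R) (j : nat) : 0 <= a <= 1 -> 0 <= a ^ j <= 1.
Proof. intros Ha; induction j; simpl; [lra|]. split; [apply Rmult_le_pos|]; nra. Qed.

Section Collapse.

Variables (n : nat) (rho s : R) (K : nat).
Hypothesis rho_range : 0 < rho < 1/2.
Hypothesis s_pos : 0 < s.

(* agent [k] at fraction [sg] and agents [k+1 .. n-1] at fraction [sg + gm] of the way
   from [a] to [b] *)
Definition span (c : nat -> R) (k : nat) (a b sg gm : R) : nat -> R :=
  two_level n c k (a + sg * (b - a)) (a + (sg + gm) * (b - a)).

Definition collapse_spec (m : nat) : Prop :=
  forall k c a b, (k + m + 1 = n)%nat ->
    (exists lam, 0 <= lam <= 1 /\
       run n rho (two_level n c k a b) (collapse K m k) = level n c k (a + lam * (b - a))) /\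
    ((0 < m)%nat ->
       round_gain rho s K ^ m * pw (Rabs (b - a)) s
         <= run_energy n rho s (two_level n c k a b) (collapse K m k)).

Lemma collapse_spec_0 : collapse_spec 0.
Proof.
  intros k c a b Hk. split; [|lia]. exists 0. split; [lra|].
  simpl. apply functional_extensionality; intros i. unfold two_level, level.
  case_nat; try lia; try reflexivity. subst; ring.
Qed.

Lemma span_gap (c : nat -> R) (k : nat) (a b sg gm : R) :
  0 <= gm -> (S k < n)%nat ->
  Rabs (span c k a b sg gm k - span c k a b sg gm (S k)) = gm * Rabs (b - a).
Proof.
  intros Hgm Hk. unfold span, two_level. case_nat; try lia.
  replace (a + sg * (b - a) - (a + (sg + gm) * (b - a))) with (- (gm * (b - a))) by ring.
  rewrite Rabs_Ropp, Rabs_mult, Rabs_pos_eq by exact Hgm. reflexivity.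
Qed.

Lemma collapse_block (m : nat) : collapse_spec m ->
  forall k c a b sg gm, (k + S m + 1 = n)%nat -> 0 <= gm ->
  exists sg' gm', sg <= sg' /\ (1 - 2 * rho) * gm <= gm' /\ sg' + gm' <= sg + gm /\
    run n rho (span c k a b sg gm) (Pull k :: collapse K m (S k)) = span c k a b sg' gm' /\
    Rpower rho s * round_gain rho s K ^ m * pw (gm * Rabs (b - a)) s
      <= run_energy n rho s (span c k a b sg gm) (Pull k :: collapse K m (S k)).
Proof.
  intros IH k c a b sg gm Hk Hgm.
  set (u := a + sg * (b - a)); set (v := a + (sg + gm) * (b - a)).
  set (c' := fun i => if Nat.eqb i k then u + rho * (v - u) else c i).
  assert (Hpull : apply_step n rho (Pull k) (span c k a b sg gm)
                  = two_level n c' (S k) (v + rho * (u - v)) v).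
  { rewrite apply_Pull by (lra || lia). apply functional_extensionality; intros i.
    unfold span, two_level, c', u, v; case_nat; try lia; ring. }
  destruct (IH (S k) c' (v + rho * (u - v)) v) as [[lam [Hlam Hrun]] Hen]; [lia|].
  exists (sg + rho * gm), (gm * (1 - 2 * rho + lam * rho)).
  assert (0 <= rho * gm) by (apply Rmult_le_pos; lra).
  assert (0 <= lam * (rho * gm)) by (apply Rmult_le_pos; lra).
  split; [lra|]. split; [nra|]. split; [nra|]. split.
  - simpl. rewrite Hpull, Hrun. apply functional_extensionality; intros i.
    unfold level, span, two_level, c', u, v; case_nat; try lia; try reflexivity; ring.
  - simpl run_energy. rewrite Hpull. unfold step_weight.
    rewrite (proj2 (Nat.ltb_lt (S k) n)) by lia.
    rewrite span_gap by (lra || lia).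
    assert (Hrho_s : Rpower rho s <= 1) by (apply Rpower_le_1; lra).
    pose proof (pw_nonneg (gm * Rabs (b - a)) s).
    destruct m as [|m'].
    + simpl. pose proof (run_energy_nonneg n rho s [] (two_level n c' (S k) (v + rho * (u - v)) v)).
      simpl in *. nra.
    + specialize (Hen ltac:(lia)).
      assert (Hgap : Rabs (v - (v + rho * (u - v))) = rho * (gm * Rabs (b - a))).
      { replace (v - (v + rho * (u - v))) with (rho * (gm * (b - a))) by (unfold u, v; ring).
        rewrite !Rabs_mult, (Rabs_pos_eq rho), (Rabs_pos_eq gm); lra. }
      rewrite Hgap, pw_scale in Hen by (pose proof (Rabs_pos (b - a)); nra).
      nra.
Qed.

Lemma collapse_rounds (m : nat) : collapse_spec m ->
  forall k c a b, (k + S m + 1 = n)%nat ->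
  forall j sg gm, 0 <= gm ->
  let rounds := concat (repeat (Pull k :: collapse K m (S k)) j) in
  exists sg' gm', sg <= sg' /\ (1 - 2 * rho) ^ j * gm <= gm' /\ sg' + gm' <= sg + gm /\
    run n rho (span c k a b sg gm) rounds = span c k a b sg' gm' /\
    INR j * (Rpower rho s * round_gain rho s K ^ m) * pw ((1 - 2 * rho) ^ j * gm * Rabs (b - a)) s
      <= run_energy n rho s (span c k a b sg gm) rounds.
Proof.
  intros IH k c a b Hk j; induction j as [|j IHj]; intros sg gm Hgm rounds.
  - exists sg, gm. subst rounds; simpl. repeat split; lra.
  - destruct (collapse_block m IH k c a b sg gm Hk Hgm)
      as [sg1 [gm1 [Hsg1 [Hgm1 [Hsum1 [Hrun1 Hen1]]]]]].
    assert (Hgm1' : 0 <= gm1) by nra.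
    destruct (IHj sg1 gm1 Hgm1') as [sg' [gm' [Hsg' [Hgm' [Hsum' [Hrun' Hen']]]]]].
    exists sg', gm'. subst rounds; simpl concat.
    rewrite app_comm_cons, run_app, run_energy_app, Hrun1.
    set (F := Rpower rho s * round_gain rho s K ^ m) in *.
    set (P := (1 - 2 * rho) ^ j) in *.
    assert (HP : 0 <= P <= 1) by (apply pow_between_0_1; lra).
    assert (HF : 0 <= F)
      by (apply Rmult_le_pos; [left; apply exp_pos | apply pow_le, round_gain_nonneg]).
    assert (Hshrink : (1 - 2 * rho) ^ S j * gm <= P * gm1).
    { replace ((1 - 2 * rho) ^ S j * gm) with (P * ((1 - 2 * rho) * gm)) by (unfold P; simpl; ring).
      apply Rmult_le_compat_l; lra. }
    pose proof (Rabs_pos (b - a)) as HD.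
    assert (Hfirst : pw ((1 - 2 * rho) ^ S j * gm * Rabs (b - a)) s <= pw (gm * Rabs (b - a)) s).
    { apply pw_le; [lra|]. apply Rmult_le_compat_r; [exact HD|].
      replace ((1 - 2 * rho) ^ S j * gm) with (((1 - 2 * rho) * P) * gm) by (unfold P; simpl; ring).
      assert ((1 - 2 * rho) * P <= 1) by nra. nra. }
    assert (Hrest : pw ((1 - 2 * rho) ^ S j * gm * Rabs (b - a)) s
                    <= pw (P * gm1 * Rabs (b - a)) s)
      by (apply pw_le; [lra | apply Rmult_le_compat_r; assumption]).
    pose proof (pos_INR j).
    split; [lra|]. split; [nra|]. split; [lra|]. split; [exact Hrun'|].
    rewrite S_INR.
    assert (F * pw ((1 - 2 * rho) ^ S j * gm * Rabs (b - a)) s <= F * pw (gm * Rabs (b - a)) s)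
      by (apply Rmult_le_compat_l; assumption).
    assert (INR j * F * pw ((1 - 2 * rho) ^ S j * gm * Rabs (b - a)) s
            <= INR j * F * pw (P * gm1 * Rabs (b - a)) s)
      by (apply Rmult_le_compat_l; [apply Rmult_le_pos|]; assumption).
    lra.
Qed.

Lemma collapse_spec_S (m : nat) : collapse_spec m -> collapse_spec (S m).
Proof.
  intros IH k c a b Hk.
  assert (Hstart : span c k a b 0 1 = two_level n c k a b) by (unfold span; f_equal; ring).
  pose proof (collapse_rounds m IH k c a b Hk K 0 1 ltac:(lra)) as Hrounds; cbv zeta in Hrounds.
  destruct Hrounds as [sg [gm [Hsg [Hgm [Hsum [Hrun Hen]]]]]].
  rewrite Hstart in Hrun, Hen.
  assert (HPK : 0 < (1 - 2 * rho) ^ K) by (apply pow_lt; lra).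
  change (collapse K (S m) k) with (concat (repeat (Pull k :: collapse K m (S k)) K) ++ [Merge k]).
  split.
  - exists (sg + gm / 2). split; [lra|].
    rewrite run_app, Hrun. simpl. unfold span. rewrite apply_Merge by (lra || lia).
    f_equal; field.
  - intros _. rewrite run_energy_app.
    pose proof (run_energy_nonneg n rho s [Merge k]
                  (run n rho (two_level n c k a b)
                     (concat (repeat (Pull k :: collapse K m (S k)) K)))).
    rewrite Rmult_1_r, pw_scale in Hen by (lra || apply Rabs_pos).
    replace (round_gain rho s K ^ S m * pw (Rabs (b - a)) s)
      with (INR K * (Rpower rho s * round_gain rho s K ^ m)
            * (Rpower ((1 - 2 * rho) ^ K) s * pw (Rabs (b - a)) s))
      by (unfold round_gain; simpl; ring).
    lra.
Qed.

Theorem collapse_correct (m : nat) : collapse_spec m.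
Proof. induction m; [exact collapse_spec_0 | exact (collapse_spec_S m IHm)]. Qed.

End Collapse.

(** * Schedules as averaging systems *)

(* A schedule is played at times 1, 2, ...; past its end every agent stays put. *)
Fixpoint trajectory (n : nat) (rho : R) (r : list step) (c : nat -> R) (u : nat) : nat -> R :=
  match u with
  | O => c
  | S u' => apply_step n rho (nth u' r Idle) (trajectory n rho r c u')
  end.

Definition schedule_graph (r : list step) (t : nat) : nat -> nat -> bool :=
  graph (nth (t - 1) r Idle).

Definition schedule_positions (n : nat) (rho : R) (r : list step) (c : nat -> R) (t : nat)
  : nat -> R :=
  trajectory n rho r c (t - 1).

Lemma trajectory_cons (n : nat) (rho : R) (st : step) (r : list step) (c : nat -> R) (u : nat) :
  trajectory n rho (st :: r) c (S u) = trajectory n rho r (apply_step n rho st c) u.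
Proof. induction u as [|u IH]; simpl; [reflexivity|]. simpl in IH. rewrite IH. reflexivity. Qed.

Lemma run_energy_trajectory (n : nat) (rho s : R) (r : list step) (c : nat -> R) :
  run_energy n rho s c r =
  fold_right Rplus 0
    (map (fun u => step_weight n s (nth u r Idle) (trajectory n rho r c u)) (seq 0 (length r))).
Proof.
  revert c; induction r as [|st r IH]; intros c; [reflexivity|].
  simpl. rewrite IH, <- seq_shift, map_map. f_equal. f_equal.
  apply map_ext; intros u. rewrite trajectory_cons. reflexivity.
Qed.

Lemma schedule_averaging_system (n : nat) (rho : R) (r : list step) (c : nat -> R) :
  0 < rho <= 1/2 -> (forall i, (i < n)%nat -> 0 <= c i <= 1) ->
  averaging_system n rho (schedule_graph r) (schedule_positions n rho r c).
Proof.
  intros Hrho Hc. split; [exact Hrho|]. split; [|split; [|split]].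
  - intros t i _ _. apply graph_refl.
  - intros t i j _ _ _. apply graph_sym.
  - intros t i _. unfold schedule_positions. generalize (t - 1)%nat as u. intros u; revert i.
    induction u as [|u IH]; intros i Hi; [exact (Hc i Hi)|].
    exact (apply_step_range n rho _ _ Hrho IH i Hi).
  - intros t i Ht Hi.
    replace (schedule_positions n rho r c (S t))
      with (apply_step n rho (nth (t - 1) r Idle) (schedule_positions n rho r c t))
      by (unfold schedule_positions; replace (S t - 1)%nat with (S (t - 1)) by lia; reflexivity).
    exact (apply_step_valid n rho (nth (t - 1) r Idle) (schedule_positions n rho r c t) i Hrho Hi).
Qed.

Lemma step_weight_le_ell (n : nat) (rho s : R) (r : list step) (c : nat -> R) (u : nat) :
  0 <= s ->
  step_weight n s (nth u r Idle) (trajectory n rho r c u)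
    <= ell n (schedule_graph r) (schedule_positions n rho r c) s (S u).
Proof.
  intros Hs.
  pose proof (ell_ge_edge n (schedule_graph r) (schedule_positions n rho r c) s (S u)) as Hedge.
  pose proof (ell_nonneg n (schedule_graph r) (schedule_positions n rho r c) s (S u)).
  unfold schedule_positions, schedule_graph in *. replace (S u - 1)%nat with u in * by lia.
  destruct (nth u r Idle) as [k|k|]; simpl step_weight; [| |lra];
    (destruct (Nat.ltb_spec (S k) n); [|lra]); apply Hedge; auto; try lia;
    [apply graph_Pull | apply graph_Merge]; auto.
Qed.

Lemma fold_Rplus_map_le {A : Type} (f g : A -> R) (l : list A) :
  (forall u, In u l -> f u <= g u) ->
  fold_right Rplus 0 (map f l) <= fold_right Rplus 0 (map g l).
Proof.
  induction l as [|u l IH]; intros Hfg; simpl; [lra|].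
  apply Rplus_le_compat; [apply Hfg; left; reflexivity|].
  apply IH; intros v Hv; apply Hfg; right; exact Hv.
Qed.

Lemma schedule_energy_ge (n : nat) (rho s : R) (r : list step) (c : nat -> R) :
  0 <= s ->
  energy_ge (ell n (schedule_graph r) (schedule_positions n rho r c) s) (run_energy n rho s c r).
Proof.
  intros Hs L HL. exists (length r).
  rewrite run_energy_trajectory in HL. rewrite <- seq_shift, map_map.
  eapply Rlt_le_trans; [exact HL|]. apply fold_Rplus_map_le.
  intros u _. apply step_weight_le_ell; exact Hs.
Qed.

Lemma energy_ge_weaken (l : nat -> R) (B B' : R) : energy_ge l B -> B' <= B -> energy_ge l B'.
Proof. intros HB HB' L HL. apply HB. lra. Qed.

(** * The energy gain per level *)

Definition rounds_number (rho s : R) : nat := Z.to_nat (up (1 / (rho * s)) - 1).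

Lemma INR_up_minus_1 (X : R) : 2 <= X -> X / 2 <= INR (Z.to_nat (up X - 1)) <= X.
Proof.
  intros HX. destruct (archimed X) as [Hup1 Hup2].
  assert (Hpos : (1 < up X)%Z) by (apply lt_IZR; lra).
  rewrite INR_IZR_INZ, Z2Nat.id, minus_IZR by lia. simpl. lra.
Qed.

Lemma s_ln_bound (rho s : R) :
  0 < rho < 1 -> 0 < s <= 1 / log2 (1 / rho) -> s * - ln rho <= ln 2.
Proof.
  intros Hrho [Hs Hslog].
  assert (Hl2 : 0 < ln 2) by (rewrite <- ln_1; apply ln_increasing; lra).
  assert (Hlr : ln rho < 0) by (rewrite <- ln_1; apply ln_increasing; lra).
  unfold log2 in Hslog. replace (1 / rho) with (/ rho) in Hslog by (field; lra).
  rewrite ln_Rinv in Hslog by lra.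
  replace (1 / (- ln rho / ln 2)) with (ln 2 / - ln rho) in Hslog by (field; lra).
  apply (Rmult_le_compat_r (- ln rho)) in Hslog; [|lra].
  replace (ln 2 / - ln rho * - ln rho) with (ln 2) in Hslog by (field; lra). exact Hslog.
Qed.

Lemma ln_1_minus_2x_ge (x : R) : 0 < x <= 1/3 -> -6 * x <= ln (1 - 2 * x).
Proof.
  intros Hx. pose proof (exp_ineq1_le (- ln (1 - 2 * x))) as Hexp.
  rewrite exp_Ropp, exp_ln in Hexp by lra.
  assert (/ (1 - 2 * x) <= 1 + 6 * x).
  { apply (Rmult_le_reg_r (1 - 2 * x)); [lra|]. rewrite Rinv_l by lra. nra. }
  lra.
Qed.

Lemma exp_le (a b : R) : a <= b -> exp a <= exp b.
Proof. intros [Hab| ->]; [left; apply exp_increasing; exact Hab | lra]. Qed.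

Lemma round_gain_ge (rho s : R) :
  0 < rho <= 1/3 -> 0 < s <= 1 / log2 (1 / rho) ->
  exp (-6) / 4 / (rho * s) <= round_gain rho s (rounds_number rho s).
Proof.
  intros Hrho Hs.
  pose proof (s_ln_bound rho s ltac:(lra) Hs) as Hsln.
  assert (Hln2 : ln 2 <= - ln (1/3)).
  { rewrite <- ln_Rinv by lra. left; apply ln_increasing; lra. }
  assert (Hln_rho : - ln (1/3) <= - ln rho).
  { apply Ropp_le_contravar. destruct (Rle_lt_or_eq_dec rho (1/3)) as [Hlt| ->]; [lra| |lra].
    left; apply ln_increasing; lra. }
  assert (Hs1 : s <= 1).
  { assert (0 < ln 2) by (rewrite <- ln_1; apply ln_increasing; lra). nra. }
  set (X := 1 / (rho * s)).
  assert (Hrs : 0 < rho * s) by nra.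
  assert (HX : 3 <= X).
  { unfold X. apply (Rmult_le_reg_r (rho * s)); [exact Hrs|].
    replace (1 / (rho * s) * (rho * s)) with 1 by (field; lra). nra. }
  pose proof (INR_up_minus_1 X ltac:(lra)) as [HK1 HK2].
  unfold round_gain, rounds_number. fold X. set (K := Z.to_nat (up X - 1)) in *.
  assert (Hrho_s : / 2 <= Rpower rho s).
  { unfold Rpower. replace (/ 2) with (exp (- ln 2)) by (rewrite exp_Ropp, exp_ln; lra).
    apply exp_le. lra. }
  assert (HKrho : INR K * (rho * s) <= 1)
    by (apply (Rle_trans _ (X * (rho * s)));
        [apply Rmult_le_compat_r; lra | unfold X; right; field; lra]).
  assert (Hshrink : exp (-6) <= Rpower ((1 - 2 * rho) ^ K) s).
  { unfold Rpower. rewrite ln_pow by lra. apply exp_le.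
    pose proof (ln_1_minus_2x_ge rho Hrho). pose proof (pos_INR K).
    assert (s * (INR K * (-6 * rho)) <= s * (INR K * ln (1 - 2 * rho)))
      by (apply Rmult_le_compat_l; [lra | apply Rmult_le_compat_l; lra]).
    nra. }
  pose proof (exp_pos (-6)).
  replace (exp (-6) / 4 / (rho * s)) with (X / 2 * exp (-6) * / 2) by (unfold X; field; lra).
  apply Rmult_le_compat; try lra; [apply Rmult_le_pos; lra | apply Rmult_le_compat; lra].
Qed.

Theorem mainTheorem7 :
  exists c1 c2 : R, 0 < c1 /\ 0 < c2 /\
  forall (n : nat) (rho s : R),
    (2 <= n)%nat -> 0 < rho <= 1/3 -> 0 < s <= c1 / log2 (1 / rho) ->
    exists (g : nat -> nat -> nat -> bool) (x : nat -> nat -> R) (l : nat -> R),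
      averaging_system n rho g x /\
      (forall t, (1 <= t)%nat -> ell_value n g x s t (l t)) /\
      energy_ge l ((c2 / (rho * s)) ^ (n - 1)).
Proof.
  exists 1, (exp (-6) / 4). pose proof (exp_pos (-6)).
  split; [lra|]. split; [lra|]. intros n rho s Hn Hrho Hs.
  set (r := collapse (rounds_number rho s) (n - 1) 0).
  set (c := two_level n (fun _ => 0) 0 0 1).
  exists (schedule_graph r), (schedule_positions n rho r c),
    (ell n (schedule_graph r) (schedule_positions n rho r c) s).
  split; [|split; [intros t _; apply ell_value_ell|]].
  - apply schedule_averaging_system; [lra|]. intros i _. unfold c, two_level. case_nat; lra.
  - apply (energy_ge_weaken _ (run_energy n rho s c r)); [apply schedule_energy_ge; lra|].
    destruct (collapse_correct n rho s (rounds_number rho s) ltac:(lra) (proj1 Hs) (n - 1)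
                0%nat (fun _ => 0) 0 1 ltac:(lia)) as [_ Henergy].
    specialize (Henergy ltac:(lia)).
    rewrite Rminus_0_r, Rabs_R1, pw_1, Rmult_1_r in Henergy.
    eapply Rle_trans; [|exact Henergy]. apply pow_incr. split.
    + apply Rlt_le, Rdiv_lt_0_compat; [lra | nra].
    + apply round_gain_ge; assumption.
Qed.
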